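(* Let $G=(V,E)$ be a vertex-transitive simple undirected graph with $V=[n]$ and let $k\ge1$ be an integer. Consider the problem $$\max_{Z,X\in\mathbb S^n}\langle I,Z\rangle\ \text{ s.t. } Z_{ij}=0\ (\{i,j\}\in E),\ X_{ii}=0\ (i\in[n]),\ Z\ge0,\ X\ge0,\ Z-X\succeq0,\ \begin{bmatrix}1&\mathrm{diag}(Z)^{\top}\\ \mathrm{diag}(Z)&Z+(k-1)X\end{bmatrix}\succeq0.$$ Then the constraints $Z_{ii}-Z_{ij}-(k-1)X_{ij}\ge 0$ for all $i,j\in[n]$ with $i\ne j$ are redundant for this problem, i.e., adding them does not change its optimal value (there is an optimal solution satisfying them).
   Context: A graph is vertex-transitive if for any two vertices there is a graph automorphism mapping one to the other. $\mathbb S^n$ denotes real symmetric $n\times n$ matrices, $\langle A,B\rangle=\mathrm{trace}(AB)$, $\ge0$ entrywise nonnegativity, $\succeq0$ positive semidefiniteness, $\mathrm{diag}(Z)$ the vector of diagonal entries. *)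

From HB Require Import structures.
From mathcomp Require Import all_boot all_order all_algebra all_fingroup.
From mathcomp Require Import reals.
Set Implicit Arguments. Unset Strict Implicit. Unset Printing Implicit Defensive.
Import Order.TTheory GRing.Theory Num.Theory.
Local Open Scope ring_scope.

Definition simple_graph n (e : rel 'I_n) : Prop :=
  (forall i j, e i j = e j i) /\ (forall i, ~~ e i i).

Definition graph_automorphism n (e : rel 'I_n) (s : {perm 'I_n}) : Prop :=
  forall x y, e (s x) (s y) = e x y.

Definition vertex_transitive n (e : rel 'I_n) : Prop :=
  forall u v : 'I_n, exists s : {perm 'I_n}, graph_automorphism e s /\ s u = v.

Definition psd (R : numDomainType) m (A : 'M[R]_m) : Prop :=
  A^T = A /\ forall v : 'cV[R]_m, 0 <= (v^T *m A *m v) 0 0.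

Definition diagv (R : nzRingType) n (Z : 'M[R]_n) : 'cV[R]_n := \col_i Z i i.

Definition lifted_mx (R : nzRingType) n (k : nat) (Z X : 'M[R]_n) : 'M[R]_(1 + n) :=
  block_mx (1%:M : 'M[R]_1) (diagv Z)^T (diagv Z) (Z + (k%:R - 1) *: X).

Definition sdp_feasible (R : realType) n (e : rel 'I_n) (k : nat)
    (Z X : 'M[R]_n) : Prop :=
  Z^T = Z /\ X^T = X /\
  (forall i j, e i j -> Z i j = 0) /\
  (forall i, X i i = 0) /\
  (forall i j, 0 <= Z i j) /\
  (forall i j, 0 <= X i j) /\
  psd (Z - X) /\
  psd (lifted_mx k Z X).

Definition extra_constraints (R : realType) n (k : nat) (Z X : 'M[R]_n) : Prop :=
  forall i j : 'I_n, i != j -> 0 <= Z i i - Z i j - (k%:R - 1) * X i j.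

(* The feasible set is compact (for k >= 1 every entry is bounded through
   2x2 principal minors), so an optimal solution (Z0, X0) exists.  Graph
   automorphisms permute the constraints and fix the objective, and the
   feasible set is convex, so averaging Z0 and X0 over the automorphism group
   gives another optimal solution (Z, X); by vertex transitivity Z has
   constant diagonal.  For such a solution the extra constraint at (i, j) is
   the 2x2 minor of the lifted matrix at rows 1+i, 1+j tested against the
   vector (1, -1): Z_ii + Z_jj - 2 (Z_ij + (k-1) X_ij) >= 0. *)

From HB Require Import structures.
From mathcomp Require Import all_boot all_order all_algebra all_fingroup.
From mathcomp Require Import reals classical_sets boolp topology normedtype derive.
From mathcomp Require Import ring lra.
Set Implicit Arguments.
Unset Strict Implicit.
Unset Printing Implicit Defensive.
Import Order.TTheory GRing.Theory Num.Theory.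
Import numFieldNormedType.Exports.
Local Open Scope classical_set_scope.
Local Open Scope ring_scope.

Lemma quad_formE (R : nzRingType) m (A : 'M[R]_m) (v : 'cV[R]_m) :
  (v^T *m A *m v) 0 0 = \sum_i \sum_j v i 0 * A i j * v j 0.
Proof.
rewrite mxE exchange_big; apply: eq_bigr => i _.
by rewrite mxE big_distrl; apply: eq_bigr => j _; rewrite !mxE.
Qed.

Section Psd.
Variable R : realFieldType.
Implicit Types m p : nat.

Lemma psd_sym m (A : 'M[R]_m) i j : psd A -> A j i = A i j.
Proof. by case=> symA _; rewrite -[in LHS]symA mxE. Qed.

Lemma psd0 m : psd (0 : 'M[R]_m).
Proof. by split=> [|v]; rewrite ?trmx0 // mulmx0 mul0mx mxE. Qed.

Lemma psdD m (A B : 'M[R]_m) : psd A -> psd B -> psd (A + B).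
Proof.
move=> [symA formA] [symB formB]; split=> [|v]; first by rewrite linearD /= symA symB.
by rewrite mulmxDr mulmxDl mxE addr_ge0.
Qed.

Lemma psdZ m (c : R) (A : 'M[R]_m) : 0 <= c -> psd A -> psd (c *: A).
Proof.
move=> c_ge0 [symA formA]; split=> [|v]; first by rewrite linearZ /= symA.
by rewrite -scalemxAr -scalemxAl mxE mulr_ge0.
Qed.

Lemma psd_sum m (I : Type) (r : seq I) (P : pred I) (A : I -> 'M[R]_m) :
  (forall i, P i -> psd (A i)) -> psd (\sum_(i <- r | P i) A i).
Proof. by move=> psdA; apply: big_ind => //; [exact: psd0 | exact: psdD]. Qed.

Lemma psd_gram m p (B : 'M[R]_(m, p)) : psd (B *m B^T).
Proof.
split=> [|v]; first by rewrite trmx_mul trmxK.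
rewrite mulmxA -mulmxA -[B^T *m v]trmxK trmx_mul trmxK.
set u := v^T *m B; rewrite mxE; apply: sumr_ge0 => l _.
by rewrite [u^T _ _]mxE -expr2 sqr_ge0.
Qed.

Lemma psd_mxsub m p (f : 'I_m -> 'I_p) (A : 'M[R]_p) : psd A -> psd (mxsub f f A).
Proof.
move=> [symA formA]; set P := colsub f (1%:M : 'M[R]_p).
have -> : mxsub f f A = P^T *m A *m P.
  by rewrite trmx_mxsub trmx1 mul_rowsub_mx mul1mx -mxsub_mul mulmx1.
split=> [|v]; first by rewrite !trmx_mul trmxK symA mulmxA.
by have := formA (P *m v); rewrite trmx_mul !mulmxA.
Qed.

Lemma psd_pair_form m (A : 'M[R]_m) i j a b : psd A ->
  0 <= a ^+ 2 * A i i + a * b * (A i j + A j i) + b ^+ 2 * A j j.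
Proof.
move=> [_ formA]; pose v : 'cV[R]_m := a *: delta_mx i 0 + b *: delta_mx j 0.
have entry l l' : delta_mx 0 l *m A *m delta_mx l' 0 = (A l l')%:M :> 'M[R]_1.
  by rewrite {1}[_ *m _]mx11_scalar -rowE -colE !mxE.
have vT : v^T = a *: delta_mx 0 i + b *: delta_mx 0 j.
  by rewrite linearD !linearZ /= !trmx_delta.
have := formA v; rewrite vT !mulmxDl !mulmxDr -!(scalemxAl, scalemxAr).
rewrite !entry !mxE eqxx !mulr1n; congr (_ <= _); ring.
Qed.

Lemma psd_entry_le m (A : 'M[R]_m) i j : psd A -> `|A i j| <= (A i i + A j j) / 2.
Proof.
move=> psdA; have symA := psd_sym i j psdA.
have := psd_pair_form i j 1 1 psdA; have := psd_pair_form i j 1 (-1) psdA.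
rewrite symA ler_norml; lra.
Qed.
End Psd.

Section Lifted.
Variables (R : comNzRingType) (k : nat).
Implicit Types n p : nat.

Lemma lifted_mxEul n (Z X : 'M[R]_n) a b :
  lifted_mx k Z X (lshift n a) (lshift n b) = 1.
Proof. by rewrite block_mxEul !ord1 mxE. Qed.

Lemma lifted_mxEur n (Z X : 'M[R]_n) a j :
  lifted_mx k Z X (lshift n a) (rshift 1 j) = Z j j.
Proof. by rewrite block_mxEur !mxE. Qed.

Lemma lifted_mxEdl n (Z X : 'M[R]_n) i b :
  lifted_mx k Z X (rshift 1 i) (lshift n b) = Z i i.
Proof. by rewrite block_mxEdl !mxE. Qed.

Lemma lifted_mxEdr n (Z X : 'M[R]_n) i j :
  lifted_mx k Z X (rshift 1 i) (rshift 1 j) = Z i j + (k%:R - 1) * X i j.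
Proof. by rewrite block_mxEdr !mxE. Qed.

Lemma lifted_mx0 n : lifted_mx k (0 : 'M[R]_n) 0 = col_mx 1 0 *m (col_mx 1 0)^T.
Proof.
have diagv0 : diagv (0 : 'M[R]_n) = 0 by apply/colP => i; rewrite !mxE.
rewrite /lifted_mx diagv0 tr_col_mx mul_col_row !trmx0 trmx1.
by rewrite mul1mx !mulmx0 mul0mx scaler0 addr0.
Qed.

Definition lift_index n p (f : 'I_n -> 'I_p) (a : 'I_(1 + n)) : 'I_(1 + p) :=
  unsplit (match split a with inl o => inl o | inr i => inr (f i) end).

Lemma lifted_mx_mxsub n p (f : 'I_n -> 'I_p) (Z X : 'M[R]_p) :
  lifted_mx k (mxsub f f Z) (mxsub f f X) =
  mxsub (lift_index f) (lift_index f) (lifted_mx k Z X).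
Proof.
apply/matrixP => a b; rewrite [RHS]mxE /lift_index.
by rewrite -(splitK a) -(splitK b); case: (split a) => a'; case: (split b) => b';
  rewrite !unsplitK /= ?lifted_mxEul ?lifted_mxEur ?lifted_mxEdl ?lifted_mxEdr ?mxE.
Qed.

Lemma lifted_mx_convex n (I : Type) (r : seq I) (P : pred I) (w : I -> R)
    (Zf Xf : I -> 'M[R]_n) :
  \sum_(i <- r | P i) w i = 1 ->
  lifted_mx k (\sum_(i <- r | P i) w i *: Zf i) (\sum_(i <- r | P i) w i *: Xf i) =
  \sum_(i <- r | P i) w i *: lifted_mx k (Zf i) (Xf i).
Proof.
move=> w1; apply/matrixP => a b; rewrite summxE.
rewrite -(splitK a) -(splitK b); case: (split a) => a'; case: (split b) => b'.
- rewrite lifted_mxEul -w1; apply: eq_bigr => i _.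
  by rewrite mxE lifted_mxEul mulr1.
- rewrite lifted_mxEur summxE; apply: eq_bigr => i _.
  by rewrite [LHS]mxE [RHS]mxE lifted_mxEur.
- rewrite lifted_mxEdl summxE; apply: eq_bigr => i _.
  by rewrite [LHS]mxE [RHS]mxE lifted_mxEdl.
- rewrite lifted_mxEdr !summxE mulr_sumr -big_split; apply: eq_bigr => i _.
  by rewrite [in RHS]mxE lifted_mxEdr !mxE /=; ring.
Qed.
End Lifted.

Section Feasible.
Variables (R : realType) (k : nat).
Implicit Types n p : nat.

Lemma sdp_feasible0 n (e : rel 'I_n) : sdp_feasible e k (0 : 'M[R]_n) 0.
Proof.
split; first exact: trmx0.
split; first exact: trmx0.
split; first by move=> i j _; rewrite mxE.
split; first by move=> i; rewrite mxE.
split; first by move=> i j; rewrite mxE.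
split; first by move=> i j; rewrite mxE.
by split; [rewrite subr0; exact: psd0 | rewrite lifted_mx0; exact: psd_gram].
Qed.

Lemma sdp_feasible_mxsub n p (e : rel 'I_n) (e' : rel 'I_p) (f : 'I_n -> 'I_p)
    (Z X : 'M[R]_p) :
  {homo f : i j / e i j >-> e' i j} -> sdp_feasible e' k Z X ->
  sdp_feasible e k (mxsub f f Z) (mxsub f f X).
Proof.
move=> homo_f [symZ [symX [edgeZ [diagX [Z_ge0 [X_ge0 [psdZX psdL]]]]]]].
split; first by rewrite trmx_mxsub symZ.
split; first by rewrite trmx_mxsub symX.
split; first by move=> i j /homo_f/edgeZ; rewrite mxE.
split; first by move=> i; rewrite mxE diagX.
split; first by move=> i j; rewrite mxE Z_ge0.
split; first by move=> i j; rewrite mxE X_ge0.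
split; first by rewrite -linearB /=; exact: psd_mxsub.
by rewrite lifted_mx_mxsub; exact: psd_mxsub.
Qed.

Lemma sdp_feasible_convex n (e : rel 'I_n) (I : Type) (r : seq I) (P : pred I)
    (w : I -> R) (Zf Xf : I -> 'M[R]_n) :
  (forall i, P i -> 0 <= w i) -> \sum_(i <- r | P i) w i = 1 ->
  (forall i, P i -> sdp_feasible e k (Zf i) (Xf i)) ->
  sdp_feasible e k (\sum_(i <- r | P i) w i *: Zf i) (\sum_(i <- r | P i) w i *: Xf i).
Proof.
move=> w_ge0 w1 feas.
split.
  rewrite linear_sum; apply: eq_bigr => i /feas[symZ _].
  by rewrite linearZ /= symZ.
split.
  rewrite linear_sum; apply: eq_bigr => i /feas[_ [symX _]].
  by rewrite linearZ /= symX.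
split.
  move=> a b eab; rewrite summxE big1 // => i /feas[_ [_ [edgeZ _]]].
  by rewrite mxE edgeZ ?mulr0.
split.
  move=> a; rewrite summxE big1 // => i /feas[_ [_ [_ [diagX _]]]].
  by rewrite mxE diagX mulr0.
split.
  move=> a b; rewrite summxE; apply: sumr_ge0 => i Pi.
  by have [_ [_ [_ [_ [Z_ge0 _]]]]] := feas i Pi; rewrite mxE mulr_ge0 ?w_ge0.
split.
  move=> a b; rewrite summxE; apply: sumr_ge0 => i Pi.
  by have [_ [_ [_ [_ [_ [X_ge0 _]]]]]] := feas i Pi; rewrite mxE mulr_ge0 ?w_ge0.
split.
  rewrite -sumrB; apply: psd_sum => i Pi; rewrite -scalerBr.
  by have [_ [_ [_ [_ [_ [_ [psdZX _]]]]]]] := feas i Pi; apply: psdZ; rewrite ?w_ge0.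
rewrite lifted_mx_convex //; apply: psd_sum => i Pi.
by have [_ [_ [_ [_ [_ [_ [_ psdL]]]]]]] := feas i Pi; apply: psdZ; rewrite ?w_ge0.
Qed.

Lemma sdp_feasible_bounded n (e : rel 'I_n) (Z X : 'M[R]_n) : (0 < k)%N ->
  sdp_feasible e k Z X -> forall i j, `|Z i j| <= 1 /\ `|X i j| <= 2.
Proof.
move=> k_gt0 [_ [_ [_ [diagX [Z_ge0 [X_ge0 [psdZX psdL]]]]]]] i j.
have k1_ge0 : 0 <= (k%:R : R) - 1 by rewrite subr_ge0 ler1n.
have Z_le1 l : Z l l <= 1.
  have := psd_entry_le (lshift n 0) (rshift 1 l) psdL.
  rewrite lifted_mxEul lifted_mxEur lifted_mxEdr diagX mulr0 addr0 ger0_norm //.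
  lra.
rewrite !ger0_norm //.
have := psd_entry_le (rshift 1 i) (rshift 1 j) psdL.
have := psd_entry_le i j psdZX.
rewrite !lifted_mxEdr !diagX !mxE !diagX !mulr0 !addr0 !subr0.
have := mulr_ge0 k1_ge0 (X_ge0 i j); have := Z_le1 i; have := Z_le1 j.
rewrite !ler_norml; lra.
Qed.

Lemma extra_constraints_const_diag n (e : rel 'I_n) (Z X : 'M[R]_n) :
  sdp_feasible e k Z X -> (forall i j, Z i i = Z j j) -> extra_constraints k Z X.
Proof.
move=> [_ [_ [_ [diagX [_ [_ [_ psdL]]]]]]] constZ i j _.
have := psd_entry_le (rshift 1 i) (rshift 1 j) psdL.
rewrite !lifted_mxEdr !diagX mulr0 !addr0 (constZ j i) ler_norml; lra.
Qed.
End Feasible.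

Section ClosedSets.
Variables (R : realType) (T : topologicalType).

Lemma closed_ge0 (f : T -> R) : continuous f -> closed [set x | 0 <= f x].
Proof. by move=> cf; apply: (preimage_closed _ (@closed_ge R 0)) => x _; exact: cf. Qed.

Lemma closed_eq0 (f : T -> R) : continuous f -> closed [set x | f x = 0].
Proof. by move=> cf; apply: (preimage_closed _ (@closed_eq R 0)) => x _; exact: cf. Qed.

Lemma closed_forall (I : Type) (A : I -> set T) :
  (forall i, closed (A i)) -> closed [set x | forall i, A i x].
Proof.
move=> clA; rewrite (_ : [set x | _] = \bigcap_(i in setT) A i).
  exact: closed_bigI.
by apply/seteqP; split=> x /= Ax i //; exact: Ax.
Qed.

Lemma closed_implies (b : bool) (A : set T) : closed A -> closed [set x | b -> A x].
Proof.
case: b => clA.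
  by rewrite (_ : [set x | _] = A) // predeqE => x /=; split=> [|//]; exact.
by rewrite (_ : [set x | _] = setT) ?closedT // predeqE.
Qed.

Lemma continuous_sum (I : Type) (r : seq I) (P : pred I) (F : I -> T -> R) :
  (forall i, continuous (F i)) -> continuous (fun x => \sum_(i <- r | P i) F i x).
Proof.
by move=> cF; apply: continuous_big => [|i _]; [exact: add_continuous | exact: cF].
Qed.

Lemma closed_sym m (M : T -> 'M[R]_m) :
  (forall i j, continuous (fun x => M x i j)) -> closed [set x | (M x)^T = M x].
Proof.
move=> cM; rewrite (_ : [set x | _] = [set x | forall i j, M x j i - M x i j = 0]).
  apply: closed_forall => i; apply: closed_forall => j; apply: closed_eq0 => x.
  by apply: cvgB; apply: cM.
rewrite predeqE => x; split=> /= symM.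
  by move=> i j; rewrite -[in M x j i]symM mxE subrr.
by apply/matrixP => i j; rewrite mxE; apply/eqP; rewrite -subr_eq0 symM.
Qed.

Lemma closed_psd m (M : T -> 'M[R]_m) :
  (forall i j, continuous (fun x => M x i j)) -> closed [set x | psd (M x)].
Proof.
move=> cM; apply: closedI; first exact: closed_sym.
apply: closed_forall => v; apply: closed_ge0.
under eq_fun do rewrite quad_formE.
do 2!apply: continuous_sum => ?.
by move=> x; apply: cvgM; [apply: cvgM; [exact: cvg_cst | exact: cM] | exact: cvg_cst].
Qed.

Section ClosedFeasible.
Variables (n k : nat) (Z X : T -> 'M[R]_n).
Hypotheses (cZ : forall i j, continuous (fun x => Z x i j))
           (cX : forall i j, continuous (fun x => X x i j)).

Lemma lifted_mx_continuous a b : continuous (fun x => lifted_mx k (Z x) (X x) a b).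
Proof.
rewrite -(splitK a) -(splitK b); case: (split a) => a'; case: (split b) => b' /=.
- by under eq_fun do rewrite lifted_mxEul; exact: cst_continuous.
- by under eq_fun do rewrite lifted_mxEur; exact: cZ.
- by under eq_fun do rewrite lifted_mxEdl; exact: cZ.
under eq_fun do rewrite lifted_mxEdr.
by move=> x; apply: cvgD; [exact: cZ | apply: cvgM; [exact: cvg_cst | exact: cX]].
Qed.

Lemma closed_sdp_feasible (e : rel 'I_n) : closed [set x | sdp_feasible e k (Z x) (X x)].
Proof.
have cZX i j : continuous (fun x => (Z x - X x) i j).
  rewrite (_ : (fun x => _) = fun x => Z x i j - X x i j); last first.
    by apply/funext => x; rewrite !mxE.
  by move=> x; apply: cvgB; [exact: cZ | exact: cX].
apply: closedI; first exact: closed_sym.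
apply: closedI; first exact: closed_sym.
apply: closedI.
  apply: closed_forall => i; apply: closed_forall => j.
  by apply: closed_implies; exact: closed_eq0.
apply: closedI; first by apply: closed_forall => i; exact: closed_eq0.
apply: closedI; first by do 2!apply: closed_forall => ?; exact: closed_ge0.
apply: closedI; first by do 2!apply: closed_forall => ?; exact: closed_ge0.
apply: closedI; first exact: closed_psd.
by apply: closed_psd; exact: lifted_mx_continuous.
Qed.
End ClosedFeasible.
End ClosedSets.

Lemma bounded_rV_entries (R : realType) m (A : set 'rV[R]_m) (c : R) :
  (forall w, A w -> forall l, `|w 0 l| <= c) -> bounded_set A.
Proof.
move=> Ac; exists (Num.max 0 c); split; first exact: num_real.
move=> M; rewrite gt_max => /andP[M_gt0 cM] w Aw.
rewrite /= [`|_|]/Num.norm /= mx_normrE.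
apply: bigmax_le => [|[a l] _ /=]; first exact: ltW.
by rewrite ord1 (le_trans (Ac _ Aw l)) ?ltW.
Qed.

Section Optimum.
Variables (R : realType) (n k : nat).

(* Pairs (Z, X) are encoded as row vectors, for which closed bounded sets are
   known to be compact ([bounded_closed_compact]). *)
Local Notation rV := 'rV[R]_(n * n + n * n).

Definition Zpart (w : rV) : 'M[R]_n := vec_mx (lsubmx w).
Definition Xpart (w : rV) : 'M[R]_n := vec_mx (rsubmx w).
Definition pack (Z X : 'M[R]_n) : rV := row_mx (mxvec Z) (mxvec X).

Lemma Zpart_pack Z X : Zpart (pack Z X) = Z.
Proof. by rewrite /Zpart row_mxKl mxvecK. Qed.

Lemma Xpart_pack Z X : Xpart (pack Z X) = X.
Proof. by rewrite /Xpart row_mxKr mxvecK. Qed.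

Lemma ZpartE w i j : Zpart w i j = w 0 (lshift _ (mxvec_index i j)).
Proof. by rewrite !mxE. Qed.

Lemma XpartE w i j : Xpart w i j = w 0 (rshift _ (mxvec_index i j)).
Proof. by rewrite !mxE. Qed.

Lemma Zpart_continuous i j : continuous (fun w => Zpart w i j).
Proof. by under eq_fun do rewrite ZpartE; exact: coord_continuous. Qed.

Lemma Xpart_continuous i j : continuous (fun w => Xpart w i j).
Proof. by under eq_fun do rewrite XpartE; exact: coord_continuous. Qed.

Lemma sdp_optimum_exists (e : rel 'I_n) : (0 < k)%N ->
  exists Z X : 'M[R]_n, sdp_feasible e k Z X /\
    forall Z' X', sdp_feasible e k Z' X' -> \tr Z' <= \tr Z.
Proof.
move=> k_gt0; set F := [set w | sdp_feasible e k (Zpart w) (Xpart w)].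
have F_neq0 : F !=set0.
  by exists (pack 0 0); rewrite /F /= Zpart_pack Xpart_pack; exact: sdp_feasible0.
have F_compact : compact F.
  apply: bounded_closed_compact; last first.
    by apply: closed_sdp_feasible; [exact: Zpart_continuous | exact: Xpart_continuous].
  apply: (@bounded_rV_entries _ _ _ 2) => w Fw l; rewrite -(splitK l).
  case: (split l) => l'; case/mxvec_indexP: l' => i j /=;
    have [Z_le1 X_le2] := sdp_feasible_bounded k_gt0 Fw i j.
  - by rewrite -ZpartE (le_trans Z_le1) ?ler1n.
  - by rewrite -XpartE.
have trace_continuous : {within F, continuous (fun w => \tr (Zpart w))}.
  apply: continuous_subspaceT; apply: continuous_sum => i; exact: Zpart_continuous.
have [w Fw w_max] := compact_EVT_max F_neq0 F_compact trace_continuous.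
exists (Zpart w), (Xpart w); rewrite inE in Fw; split=> // Z X feasZX.
have := w_max (pack Z X); rewrite Zpart_pack; apply.
by rewrite inE /F /= Zpart_pack Xpart_pack.
Qed.
End Optimum.

Section GraphAutomorphisms.
Variables (n : nat) (e : rel 'I_n).

Definition graph_aut : {set {perm 'I_n}} :=
  [set s : {perm 'I_n} | [forall x, forall y, e (s x) (s y) == e x y]].

Lemma graph_autP s : reflect (graph_automorphism e s) (s \in graph_aut).
Proof.
rewrite inE; apply: (iffP forallP) => [aut_s x y | aut_s x].
  by apply/eqP; move/forallP: (aut_s x).
by apply/forallP => y; rewrite aut_s.
Qed.

Lemma group_set_graph_aut : group_set graph_aut.
Proof.
apply/group_setP; split=> [|s t /graph_autP aut_s /graph_autP aut_t].
  by apply/graph_autP => x y; rewrite !perm1.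
by apply/graph_autP => x y; rewrite !permM aut_t aut_s.
Qed.

Canonical graph_aut_group := group group_set_graph_aut.
End GraphAutomorphisms.

Section GroupAverage.
Variables (R : numFieldType) (n : nat) (G : {group {perm 'I_n}}).

Definition mx_average (A : 'M[R]_n) : 'M[R]_n :=
  \sum_(s in G) #|G|%:R^-1 *: mxsub s s A.

Lemma sum_average_weights : \sum_(s in G) #|G|%:R^-1 = 1 :> R.
Proof. by rewrite sumr_const -[_ *+ _]mulr_natr mulVf // pnatr_eq0 -lt0n cardG_gt0. Qed.

Lemma mxtrace_average A : \tr (mx_average A) = \tr A.
Proof.
have tr_mxsub (s : {perm 'I_n}) : \tr (mxsub s s A) = \tr A.
  by rewrite /mxtrace [RHS](reindex_perm s); apply: eq_bigr => i _; rewrite mxE.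
rewrite /mx_average raddf_sum /=.
under eq_bigr do rewrite mxtraceZ tr_mxsub.
by rewrite -mulr_suml sum_average_weights mul1r.
Qed.

Lemma mx_average_invariant A t : t \in G -> mxsub t t (mx_average A) = mx_average A.
Proof.
move=> Gt; apply/matrixP => i j; rewrite mxE !summxE [RHS](reindex_inj (mulgI t)) /=.
apply: eq_big => [s | s _]; first by rewrite groupMl.
by rewrite !mxE !permM.
Qed.
End GroupAverage.

Lemma sdp_feasible_average (R : realType) n (e : rel 'I_n) k (G : {group {perm 'I_n}})
    (Z X : 'M[R]_n) :
  G \subset graph_aut e -> sdp_feasible e k Z X ->
  sdp_feasible e k (mx_average G Z) (mx_average G X).
Proof.
move=> /fintype.subsetP G_aut feasZX; apply: sdp_feasible_convex => [s _ | | s Gs].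
- by rewrite invr_ge0 ler0n.
- exact: sum_average_weights.
apply: sdp_feasible_mxsub feasZX => x y.
by have /graph_autP aut_s := G_aut s Gs; rewrite aut_s.
Qed.

Lemma vertex_transitive_average_diag (R : realType) n (e : rel 'I_n) (A : 'M[R]_n) :
  vertex_transitive e ->
  forall i j, mx_average (graph_aut_group e) A i i = mx_average (graph_aut_group e) A j j.
Proof.
move=> trans_e i j; have [t [/graph_autP aut_t <-]] := trans_e i j.
by rewrite -[in LHS](mx_average_invariant _ aut_t) mxE.
Qed.

Theorem proposition2 (R : realType) (n : nat) (e : rel 'I_n) (k : nat) :
  simple_graph e -> vertex_transitive e -> (0 < k)%N ->
  exists Z X : 'M[R]_n,
    [/\ sdp_feasible e k Z X,
        extra_constraints k Z X &
        forall Z' X' : 'M[R]_n, sdp_feasible e k Z' X' -> \tr Z' <= \tr Z].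
Proof.
move=> _ trans_e k_gt0.
have [Z0 [X0 [feas0 opt0]]] := sdp_optimum_exists R e k_gt0.
pose avg := @mx_average R n (graph_aut_group e).
have feas : sdp_feasible e k (avg Z0) (avg X0).
  by apply: sdp_feasible_average feas0; exact: subxx.
exists (avg Z0), (avg X0); split=> //.
  exact: extra_constraints_const_diag feas (vertex_transitive_average_diag _ trans_e).
by move=> Z' X' /opt0; rewrite mxtrace_average.
Qed.
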